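(* Let $H$ be an abelian group with a non-degenerate alternating $\mathbb{Z}$-bilinear form $\langle-,-\rangle$ (i.e. $\ker\mu=0$). Then there are isomorphisms \[ H_2(\mathbb{Q}[H])\longrightarrow H_2(\mathbb{Q}[H^{(1)}])\longrightarrow \mathbb{Q}\otimes_{\mathbb{Z}}H, \] the first being induced by the projection $\varpi^{(1)}:\mathbb{Q}[H]=\mathbb{Q}[\ker\mu]\oplus\mathbb{Q}[H^{(1)}]\to\mathbb{Q}[H^{(1)}]$.
   Context: $\mu:H\to\mathrm{Hom}_{\mathbb{Z}}(H,\mathbb{Z})$, $\mu(x)(y)=\langle x,y\rangle$; $H^{(1)}:=H\setminus\ker\mu$. $\mathbb{Q}[S]$ ($S\subset H$) is the $\mathbb{Q}$-vector space with basis symbols $[x]$, $x\in S$; $\mathbb{Q}[H]$ is a Lie algebra via $[[x],[y]]=\langle x,y\rangle[x+y]$, $\mathbb{Q}[H^{(1)}]$ is its derived subalgebra (a Lie subalgebra; it is $0$ if $H^{(1)}=\emptyset$) and $\mathbb{Q}[\ker\mu]$ its center, and $\varpi^{(1)}$ is a Lie algebra homomorphism. $H_2$ denotes Lie algebra homology with trivial coefficients $\mathbb{Q}$ (Chevalley–Eilenberg complex). *)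

(* Chevalley--Eilenberg chains in low degrees for the Lie
   algebra Q[H] (basis [x], x in H, bracket [[x],[y]] = <x,y>[x+y]) and its
   Lie subalgebras Q[S], S a subset of H closed enough (here S = H or H^(1)).
   Chains are finite formal Q-linear combinations (sequences); their value in
   Q[H], /\^2 Q[H] resp. Q (x)_Z H is given by coefficient functions /
   explicit relations. *)
From HB Require Import structures.
From mathcomp Require Import all_boot all_order all_algebra.
From mathcomp Require Import boolp.
Set Implicit Arguments. Unset Strict Implicit. Unset Printing Implicit Defensive.
Import Order.TTheory GRing.Theory Num.Theory.
Local Open Scope ring_scope.

Section CE.
Variable H : zmodType.
Variable form : H -> H -> int.

(* 1-chains: sum of q [x];  2-chains: sum of q [x]/\[y];
   3-chains: sum of q [x]/\[y]/\[z].  Also used for Q (x)_Z H: sum of q (x) x. *)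
Definition chain1 := seq (rat * H).
Definition chain2 := seq (rat * H * H).
Definition chain3 := seq (rat * H * H * H).

Definition coef1 (c : chain1) (a : H) : rat :=
  \sum_(t <- c) (if t.2 == a then t.1 else 0).

(* coefficient of [a]/\[b] (as an alternating function of (a,b)) in a
   2-chain; two 2-chains are equal in /\^2 Q[H] iff these agree. *)
Definition coef2 (c : chain2) (a b : H) : rat :=
  \sum_(t <- c) t.1.1 * (((t.1.2 == a) && (t.2 == b))%:R
                         - ((t.1.2 == b) && (t.2 == a))%:R).

Definition eq2 (c c' : chain2) : Prop := forall a b, coef2 c a b = coef2 c' a b.

Definition scale1 (k : rat) (c : chain1) : chain1 :=
  [seq (k * t.1, t.2) | t <- c].
Definition sub1 (c c' : chain1) : chain1 := c ++ scale1 (-1) c'.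
Definition scale2 (k : rat) (c : chain2) : chain2 :=
  [seq (k * t.1.1, t.1.2, t.2) | t <- c].
Definition add2 (c c' : chain2) : chain2 := c ++ c'.
Definition sub2 (c c' : chain2) : chain2 := c ++ scale2 (-1) c'.

Definition br (x y : H) : rat := (form x y)%:~R.

(* Chevalley--Eilenberg differentials (up to a global sign, irrelevant for
   kernels and images):
   d2 ([x]/\[y]) = [[x],[y]]
   d3 ([x]/\[y]/\[z]) = [[x],[y]]/\[z] - [[x],[z]]/\[y] + [[y],[z]]/\[x] *)
Definition d2 (c : chain2) : chain1 :=
  [seq (t.1.1 * br t.1.2 t.2, t.1.2 + t.2) | t <- c].
Definition d3 (c : chain3) : chain2 :=
  flatten [seq let: (q, x, y, z) := t in
               [:: (q * br x y, x + y, z); (- (q * br x z), x + z, y);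
                   (q * br y z, y + z, x)] | t <- c].

(* chains of the Lie subalgebra Q[S] : all basis elements in S *)
Definition supp2 (S : pred H) (c : chain2) : bool :=
  all (fun t => S t.1.2 && S t.2) c.
Definition supp3 (S : pred H) (c : chain3) : bool :=
  all (fun t => [&& S t.1.1.2, S t.1.2 & S t.2]) c.

Definition cycle2 (S : pred H) (c : chain2) : Prop :=
  supp2 S c /\ forall a, coef1 (d2 c) a = 0.
Definition bound2 (S : pred H) (c : chain2) : Prop :=
  exists t : chain3, supp3 S t /\ eq2 c (d3 t).

Definition H1 : pred H := fun x => `[< exists y, form x y != 0 >].

(* /\^2 of the projection varpi^(1) : Q[H] -> Q[H^(1)] *)
Definition proj2 (c : chain2) : chain2 := [seq t <- c | H1 t.1.2 && H1 t.2].

(* Q (x)_Z H = Q[H] / span{ [x+y] - [x] - [y] }  (Q (x)_Z - is right exact) *)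
Definition tens_rel (r : chain2) : chain1 :=
  flatten [seq let: (q, x, y) := t in [:: (q, x + y); (- q, x); (- q, y)]
          | t <- r].
Definition tzero (c : chain1) : Prop :=
  exists r : chain2, forall a, coef1 c a = coef1 (tens_rel r) a.

End CE.

From Pilot Require Import Defs.
From HB Require Import structures.
From mathcomp Require Import all_boot all_order all_algebra.
From mathcomp Require Import boolp.
From mathcomp Require Import ring zify.
Set Implicit Arguments. Unset Strict Implicit. Unset Printing Implicit Defensive.
Import Order.TTheory GRing.Theory Num.Theory.
Local Open Scope ring_scope.

(* Non-degeneracy makes H^(1) = H \ {0}.  For the projection, a wedge [0]/\[y]
   is a multiple of the boundary of [0]/\[v]/\[y - v] for any v with
   <v, y> <> 0, and masking out the index 0 sends each elementary boundary of
   Q[H] to a boundary of Q[H^(1)].  For the second map, split 2-chains of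
   Q[H^(1)] by the weight x + y of their wedges [x]/\[y]; the boundary of
   [x]/\[y]/\[z] is homogeneous of weight x + y + z.  In a weight g <> 0,
   such boundaries make every [x]/\[g - x] homologous to a multiple of
   [x1]/\[g - x1], for an auxiliary x1 pairing non-trivially with everything
   in sight, and the cycle condition in weight g makes these multiples cancel.
   In weight 0 the wedges [x]/\[-x] are additive in x modulo boundaries, so
   [x]/\[-x] |-> x identifies the weight-0 homology with Q (x)_Z H. *)

(* poly exports a lemma coef1 that would shadow the chain coefficient. *)
Notation coef1 := Defs.coef1.

Lemma int_addr_mulrn_neq0 (a b : int) (n : nat) :
  a != 0 -> (`|a| < n)%N -> a + b *+ n != 0.
Proof.
move=> a0 lt_an; apply/eqP => e.
have ea : a = - (b *+ n) by apply/eqP; rewrite -addr_eq0 e.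
move: lt_an; rewrite ea abszN -mulr_natr abszM natz absz_nat => lt_bn.
have /eqP : `|b|%N = 0%N by nia.
by rewrite absz_eq0 => /eqP b0; move: a0; rewrite ea b0 mul0rn oppr0 eqxx.
Qed.

Section NondegenerateForm.
Variables (H : zmodType) (form : H -> H -> int).
Hypothesis form_addl : forall x y z, form (x + y) z = form x z + form y z.
Hypothesis form_addr : forall x y z, form x (y + z) = form x y + form x z.
Hypothesis form_alt : forall x, form x x = 0.
Hypothesis form_nondeg : forall x, (forall y, form x y = 0) -> x = 0.

Lemma form0l y : form 0 y = 0.
Proof. by have := form_addl 0 0 y; rewrite addr0; lia. Qed.

Lemma form0r y : form y 0 = 0.
Proof. by have := form_addr y 0 0; rewrite addr0; lia. Qed.

Lemma formNl x y : form (- x) y = - form x y.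
Proof. by have := form_addl (- x) x y; rewrite addNr form0l; lia. Qed.

Lemma formNr x y : form x (- y) = - form x y.
Proof. by have := form_addr x (- y) y; rewrite addNr form0r; lia. Qed.

Lemma formBl x y z : form (x - y) z = form x z - form y z.
Proof. by rewrite form_addl formNl. Qed.

Lemma form_skew x y : form y x = - form x y.
Proof.
have := form_alt (x + y).
by rewrite form_addl !form_addr !form_alt add0r addr0; lia.
Qed.

Lemma form_mulrnr u v n : form u (v *+ n) = form u v *+ n.
Proof.
by elim: n => [|n IHn]; rewrite ?mulr0n ?form0r // !mulrS form_addr IHn.
Qed.

Lemma form_neq0_l x y : form x y != 0 -> x != 0.
Proof. by apply: contra => /eqP ->; rewrite form0l. Qed.

Lemma form_neq0_r x y : form y x != 0 -> x != 0.
Proof. by apply: contra => /eqP ->; rewrite form0r. Qed.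

Lemma H1E u : H1 form u = (u != 0).
Proof.
apply/idP/idP => [/asboolP[y]|u0]; first by apply: contraNneq => ->; rewrite form0l.
apply/asboolP; apply: contrapT => no_y; move/eqP: u0; apply.
by apply: form_nondeg => y; apply/eqP/negPn/negP => fy; apply: no_y; exists y.
Qed.

Lemma H1_neq0 u : u != 0 -> H1 form u.
Proof. by rewrite H1E. Qed.

(* If v0 serves s but <u, v0> = 0, take v0 + N v with <u, v> <> 0 and N
   exceeding every |<u', v0>|. *)
Lemma exists_form_neq0 (s : seq H) :
  all (fun u => u != 0) s -> exists v, forall u, u \in s -> form u v != 0.
Proof.
elim: s => [|u s IHs]; first by exists 0.
case/andP=> u0 /IHs[v0 hv0].
have [fu0|fu0] := eqVneq (form u v0) 0; last first.
  by exists v0 => u'; rewrite in_cons => /predU1P[->|]; last exact: hv0.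
move: u0; rewrite -H1E => /asboolP[v fuv].
pose N := (\sum_(y <- s) `|form y v0|%N).+1.
exists (v0 + v *+ N) => u'; rewrite in_cons form_addr form_mulrnr => /predU1P[->|su'].
  by rewrite fu0 add0r mulrn_eq0 negb_or fuv.
apply: int_addr_mulrn_neq0; first exact: hv0.
by rewrite /N ltnS (big_rem u') //= leq_addr.
Qed.

Local Notation br := (br form).

Lemma brDl x y z : br (x + y) z = br x z + br y z.
Proof. by rewrite /br form_addl intrD. Qed.

Lemma brDr x y z : br x (y + z) = br x y + br x z.
Proof. by rewrite /br form_addr intrD. Qed.

Lemma brNr x y : br x (- y) = - br x y.
Proof. by rewrite /br formNr mulrNz. Qed.

Lemma brBr x y z : br x (y - z) = br x y - br x z.
Proof. by rewrite brDr brNr. Qed.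

Lemma brxx x : br x x = 0.
Proof. by rewrite /br form_alt. Qed.

Lemma br0l x : br 0 x = 0.
Proof. by rewrite /br form0l. Qed.

Lemma br0r x : br x 0 = 0.
Proof. by rewrite /br form0r. Qed.

Lemma br_skew x y : br y x = - br x y.
Proof. by rewrite /br form_skew mulrNz. Qed.

Lemma br_eq0 x y : (br x y == 0) = (form x y == 0).
Proof. by rewrite /br intr_eq0. Qed.

(** * Coefficient functions of 2-chains and their boundaries *)

Definition wedge (u v p r : H) : rat :=
  ((u == p) && (v == r))%:R - ((u == r) && (v == p))%:R.

Lemma wedge_skew u v p r : wedge v u p r = - wedge u v p r.
Proof. by rewrite /wedge [(v == p) && _]andbC [(v == r) && _]andbC opprB. Qed.

Lemma wedgexx u p r : wedge u u p r = 0.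
Proof. by rewrite /wedge andbC subrr. Qed.

Lemma coef2E (c : chain2 H) p r :
  coef2 c p r = \sum_(t <- c) t.1.1 * wedge t.1.2 t.2 p r.
Proof. by []. Qed.

Lemma coef2_cat (c c' : chain2 H) p r :
  coef2 (c ++ c') p r = coef2 c p r + coef2 c' p r.
Proof. by rewrite !coef2E big_cat. Qed.

Lemma coef2_scale k (c : chain2 H) p r : coef2 (scale2 k c) p r = k * coef2 c p r.
Proof. by rewrite !coef2E big_map mulr_sumr; apply: eq_bigr => t _ /=; ring. Qed.

Lemma coef2_sub (c c' : chain2 H) p r :
  coef2 (sub2 c c') p r = coef2 c p r - coef2 c' p r.
Proof. by rewrite /sub2 coef2_cat coef2_scale; ring. Qed.

Definition d3_coef (s : rat * H * H * H) p r : rat :=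
  let: (q, x, y, z) := s in
  q * br x y * wedge (x + y) z p r - q * br x z * wedge (x + z) y p r
  + q * br y z * wedge (y + z) x p r.

Lemma coef2_d3 (t : chain3 H) p r : coef2 (d3 form t) p r = \sum_(s <- t) d3_coef s p r.
Proof.
elim: t => [|[[[q x] y] z] t IHt]; first by rewrite /d3 /= coef2E !big_nil.
by rewrite big_cons -IHt !coef2E /d3 /= !big_cons /=; ring.
Qed.

(* [bound2 S c] unfolds to [boundary S (coef2 c)]. *)
Definition boundary (S : pred H) (F : H -> H -> rat) :=
  exists t : chain3 H, supp3 S t /\ forall p r, F p r = coef2 (d3 form t) p r.

Lemma boundary0 S : boundary S (fun _ _ => 0).
Proof. by exists [::]; split => // p r; rewrite coef2_d3 big_nil. Qed.

Lemma eq_boundary S F G : (forall p r, F p r = G p r) -> boundary S G -> boundary S F.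
Proof. by move=> eFG [t [St tG]]; exists t; split => // p r; rewrite eFG tG. Qed.

Lemma boundaryD S F G : boundary S F -> boundary S G -> boundary S (fun p r => F p r + G p r).
Proof.
move=> [t [St tF]] [t' [St' t'G]]; exists (t ++ t'); split.
  by rewrite /supp3 all_cat; apply/andP.
by move=> p r; rewrite coef2_d3 big_cat -!coef2_d3 tF t'G.
Qed.

Lemma boundaryZ S k F : boundary S F -> boundary S (fun p r => k * F p r).
Proof.
move=> [t [St tF]].
exists [seq (k * s.1.1.1, s.1.1.2, s.1.2, s.2) | s <- t]; split.
  by rewrite /supp3 all_map; apply: sub_all St => s.
move=> p r; rewrite tF !coef2_d3 big_map mulr_sumr; apply: eq_bigr => -[[[q x] y] z] _ /=.
by ring.
Qed.

Lemma boundaryB S F G : boundary S F -> boundary S G -> boundary S (fun p r => F p r - G p r).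
Proof.
move=> bF /(boundaryZ (-1)) bG.
by apply: eq_boundary (boundaryD bF bG) => p r; ring.
Qed.

Lemma boundary_sum S (I : eqType) (s : seq I) (F : I -> H -> H -> rat) :
  (forall i, i \in s -> boundary S (F i)) -> boundary S (fun p r => \sum_(i <- s) F i p r).
Proof.
elim: s => [|i s IHs] bF.
  by apply: eq_boundary (boundary0 S) => p r; rewrite big_nil.
apply: eq_boundary (boundaryD (bF i (mem_head i s)) (IHs _)) => [p r|j sj].
  by rewrite big_cons.
by apply: bF; rewrite in_cons sj orbT.
Qed.

Lemma boundaryS (S S' : pred H) F : (forall x, S x -> S' x) -> boundary S F -> boundary S' F.
Proof.
move=> sSS' [t [St tF]]; exists t; split => //.
by apply: sub_all St => s /and3P[? ? ?]; rewrite !sSS'.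
Qed.

Lemma boundary_d3_coef (S : pred H) q x y z :
  S x -> S y -> S z -> boundary S (d3_coef (q, x, y, z)).
Proof.
move=> Sx Sy Sz; exists [:: (q, x, y, z)]; split; first by rewrite /supp3 /= Sx Sy Sz.
by move=> p r; rewrite coef2_d3 big_seq1.
Qed.

Lemma d3_coef_weight g q x y p r :
  d3_coef (q, x, y, g - (x + y)) p r =
  q * (br x y * wedge (x + y) (g - (x + y)) p r + (br x g - br x y) * wedge y (g - y) p r
       - (br y g + br x y) * wedge x (g - x) p r).
Proof.
have e1 : x + (g - (x + y)) = g - y by rewrite opprD addrCA addNKr.
have e2 : y + (g - (x + y)) = g - x by rewrite opprD addrCA [- x - y]addrC addNKr.
rewrite /d3_coef e1 e2 (wedge_skew (g - y)) (wedge_skew (g - x)).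
by rewrite !brBr !brDr !brxx (br_skew y x); ring.
Qed.

(** * The projection to Q[H^(1)] *)

Definition nz_ind (p r : H) : rat := ((p != 0) && (r != 0))%:R.

Lemma nz_ind_wedge x y p r : nz_ind x y * wedge x y p r = nz_ind p r * wedge x y p r.
Proof.
rewrite /wedge !mulrBr.
by congr (_ - _); case: (x =P _) => [->|]; case: (y =P _) => [->|] //=;
  rewrite ?mulr0 ?mulr1 // /nz_ind andbC.
Qed.

Lemma nz_ind_wedge0r u p r : nz_ind p r * wedge u 0 p r = 0.
Proof. by rewrite -nz_ind_wedge /nz_ind eqxx andbF mul0r. Qed.

Lemma nz_ind_wedge_br x y v p r :
  v != 0 -> nz_ind p r * (br x y * wedge (x + y) v p r) = br x y * wedge (x + y) v p r.
Proof.
move=> v0; rewrite mulrCA -nz_ind_wedge.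
have [xy0|xy0] := eqVneq (x + y) 0; last by rewrite /nz_ind xy0 v0 mul1r.
have -> : y = - x by apply/eqP; rewrite -addr_eq0 addrC xy0.
by rewrite brNr brxx oppr0 !mul0r ?mulr0.
Qed.

(* A term of d3 with an index 0 either vanishes after masking or, when all
   indices are non-zero, is already a boundary of Q[H^(1)]. *)
Lemma boundary_nz_ind_d3_coef s : boundary (H1 form) (fun p r => nz_ind p r * d3_coef s p r).
Proof.
case: s => [[[q x] y] z].
have split_d3 x' y' z' p r : nz_ind p r * d3_coef (q, x', y', z') p r =
    q * (nz_ind p r * (br x' y' * wedge (x' + y') z' p r))
  - q * (nz_ind p r * (br x' z' * wedge (x' + z') y' p r))
  + q * (nz_ind p r * (br y' z' * wedge (y' + z') x' p r)) by rewrite /d3_coef; ring.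
have [->|x0] := eqVneq x 0.
  apply: eq_boundary (boundary0 _) => p r; rewrite split_d3 !br0l.
  by rewrite [nz_ind p r * (br y z * _)]mulrCA nz_ind_wedge0r; ring.
have [->|y0] := eqVneq y 0.
  apply: eq_boundary (boundary0 _) => p r; rewrite split_d3 !br0l !br0r.
  by rewrite [nz_ind p r * (_ * wedge (x + z) 0 p r)]mulrCA nz_ind_wedge0r; ring.
have [->|z0] := eqVneq z 0.
  apply: eq_boundary (boundary0 _) => p r; rewrite split_d3 !br0r.
  by rewrite [nz_ind p r * (_ * wedge (x + y) 0 p r)]mulrCA nz_ind_wedge0r; ring.
apply: eq_boundary (boundary_d3_coef q (H1_neq0 x0) (H1_neq0 y0) (H1_neq0 z0)) => p r.
by rewrite split_d3 !nz_ind_wedge_br // /d3_coef; ring.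
Qed.

Lemma coef2_proj2 z p r : coef2 (proj2 form z) p r = nz_ind p r * coef2 z p r.
Proof.
rewrite !coef2E /proj2 big_filter big_mkcond mulr_sumr; apply: eq_bigr => t _.
by rewrite !H1E mulrCA -nz_ind_wedge /nz_ind; case: ifP; rewrite ?mul1r ?mul0r ?mulr0.
Qed.

Lemma proj2_cycle z : cycle2 form predT z -> cycle2 form (H1 form) (proj2 form z).
Proof.
move=> [_ dz0]; split; first by apply/allP => t; rewrite mem_filter => /andP[].
move=> a; rewrite -(dz0 a) /coef1 /d2 !big_map /proj2 big_filter big_mkcond.
apply: eq_bigr => t _; case: ifP => // /negbT; rewrite !H1E negb_and !negbK.
by case/orP => /eqP ->; rewrite ?br0l ?br0r !mulr0 ?addr0 ?add0r; case: ifP.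
Qed.

Lemma proj2_bound z : bound2 form predT z -> bound2 form (H1 form) (proj2 form z).
Proof.
move=> [t [_ zt]].
apply: eq_boundary (boundary_sum (fun s _ => boundary_nz_ind_d3_coef s)) => p r.
by rewrite coef2_proj2 zt coef2_d3 mulr_sumr.
Qed.

Lemma proj2_surj z' : cycle2 form (H1 form) z' ->
  exists z, cycle2 form predT z /\ bound2 form (H1 form) (sub2 (proj2 form z) z').
Proof.
move=> [Sz' dz'0]; exists z'; split; first by split => //; apply/allP.
have -> : proj2 form z' = z' by apply/all_filterP.
by apply: eq_boundary (boundary0 _) => p r; rewrite coef2_sub subrr.
Qed.

Lemma boundary_wedge0l y : boundary predT (wedge 0 y).
Proof.
have [->|y0] := eqVneq y 0.
  by apply: eq_boundary (boundary0 _) => p r; rewrite wedgexx.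
move: y0; rewrite -H1E => /asboolP[v fyv].
have bvy : br v y != 0 by rewrite br_eq0 form_skew oppr_eq0.
have := boundary_d3_coef (S := predT) (x := 0) (y := v) (z := y - (0 + v)) (- (br v y)^-1).
move=> /(_ isT isT isT); apply: eq_boundary => p r.
by rewrite d3_coef_weight !br0l !subr0; field.
Qed.

Lemma proj2_inj z :
  bound2 form (H1 form) (proj2 form z) -> bound2 form predT z.
Proof.
move=> /(boundaryS (S' := predT) (fun _ _ => isT)) bproj.
have brest : boundary predT (fun p r => \sum_(t <- z)
    (if (t.1.2 != 0) && (t.2 != 0) then 0 else t.1.1 * wedge t.1.2 t.2 p r)).
  apply: boundary_sum => t _.
  have [_|] := boolP ((t.1.2 != 0) && (t.2 != 0)); first exact: boundary0.
  rewrite negb_and !negbK => /orP[]/eqP->; first exact: boundaryZ (boundary_wedge0l _).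
  apply: eq_boundary (boundaryZ (- t.1.1) (boundary_wedge0l t.1.2)) => p r.
  by rewrite wedge_skew; ring.
apply: eq_boundary (boundaryD bproj brest) => p r.
rewrite !coef2E /proj2 big_filter [in RHS]big_mkcond -big_split; apply: eq_bigr => t _ /=.
by rewrite !H1E; case: ifP => _ /=; ring.
Qed.

(** * The isomorphism with Q (x)_Z H *)

(* [tzero c] unfolds to [tensor_null (coef1 c)]. *)
Definition tensor_null (F : H -> rat) :=
  exists r : chain2 H, forall a, F a = coef1 (tens_rel r) a.

Lemma coef1E (c : chain1 H) a : coef1 c a = \sum_(t <- c) t.1 * (t.2 == a)%:R.
Proof. by apply: eq_bigr => t _; case: (t.2 == a); rewrite ?mulr1 ?mulr0. Qed.

Lemma coef1_cat (c c' : chain1 H) a : coef1 (c ++ c') a = coef1 c a + coef1 c' a.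
Proof. by rewrite /coef1 big_cat. Qed.

Lemma coef1_scale k (c : chain1 H) a : coef1 (scale1 k c) a = k * coef1 c a.
Proof. by rewrite !coef1E big_map mulr_sumr; apply: eq_bigr => t _ /=; ring. Qed.

Lemma coef1_sub (c c' : chain1 H) a : coef1 (sub1 c c') a = coef1 c a - coef1 c' a.
Proof. by rewrite /sub1 coef1_cat coef1_scale; ring. Qed.

Lemma tens_rel_cat (r r' : chain2 H) : tens_rel (r ++ r') = tens_rel r ++ tens_rel r'.
Proof. by rewrite /tens_rel map_cat flatten_cat. Qed.

Lemma coef1_tens_rel_scale k (r : chain2 H) a :
  coef1 (tens_rel (scale2 k r)) a = k * coef1 (tens_rel r) a.
Proof.
elim: r => [|[[q x] y] r IHr]; first by rewrite /coef1 !big_nil mulr0.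
rewrite -cat1s /scale2 map_cat !tens_rel_cat !coef1_cat IHr.
by rewrite !coef1E !big_cons !big_nil /=; ring.
Qed.

Lemma tensor_null0 : tensor_null (fun _ => 0).
Proof. by exists [::] => a; rewrite /coef1 big_nil. Qed.

Lemma eq_tensor_null F G : (forall a, F a = G a) -> tensor_null G -> tensor_null F.
Proof. by move=> eFG [r rG]; exists r => a; rewrite eFG rG. Qed.

Lemma tensor_nullD F G : tensor_null F -> tensor_null G -> tensor_null (fun a => F a + G a).
Proof.
by move=> [r rF] [r' r'G]; exists (r ++ r') => a; rewrite tens_rel_cat coef1_cat rF r'G.
Qed.

Lemma tensor_nullZ k F : tensor_null F -> tensor_null (fun a => k * F a).
Proof. by move=> [r rF]; exists (scale2 k r) => a; rewrite coef1_tens_rel_scale rF. Qed.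

Lemma tensor_nullB F G : tensor_null F -> tensor_null G -> tensor_null (fun a => F a - G a).
Proof.
move=> nF /(tensor_nullZ (-1)) nG.
by apply: eq_tensor_null (tensor_nullD nF nG) => a; ring.
Qed.

Lemma tensor_null_sum (I : Type) (s : seq I) (F : I -> H -> rat) :
  (forall i, tensor_null (F i)) -> tensor_null (fun a => \sum_(i <- s) F i a).
Proof.
move=> nF; elim: s => [|i s IHs].
  by apply: eq_tensor_null tensor_null0 => a; rewrite big_nil.
by apply: eq_tensor_null (tensor_nullD (nF i) IHs) => a; rewrite big_cons.
Qed.

Lemma tensor_null_triple u v z : u + v + z = 0 ->
  tensor_null (fun a => (u == a)%:R + (v == a)%:R + (z == a)%:R).
Proof.
move=> uvz0; exists [:: (-1, u, v); (-1, u + v, z); (-1, 0, 0)] => a.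
by rewrite /tens_rel /= !coef1E !big_cons big_nil /= uvz0 addr0; ring.
Qed.

Lemma tensor_null_at0 : tensor_null (fun a => (0 == a)%:R).
Proof.
exists [:: (-1, 0, 0)] => a.
by rewrite /tens_rel /= !coef1E !big_cons big_nil /= addr0; ring.
Qed.

Lemma tensor_null_pair x : tensor_null (fun a => (x == a)%:R + (- x == a)%:R).
Proof.
have := tensor_nullB (@tensor_null_triple x (- x) 0 _) tensor_null_at0.
by rewrite addrN addr0 => /(_ erefl); apply: eq_tensor_null => a; ring.
Qed.

(* [x]/\[-x] |-> x, written as (1/2)([x] - [-x]) so that the coefficients of
   the image depend only on the coefficient function of the chain. *)
Definition to_tensor (c : chain2 H) : chain1 H :=
  flatten [seq (if t.1.2 + t.2 == 0 then [:: (t.1.1 / 2, t.1.2); (- (t.1.1 / 2), t.2)]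
                else [::]) | t <- c].

Definition wedge_opp u := wedge u (- u).

Lemma wedge_opp0 p r : wedge_opp 0 p r = 0.
Proof. by rewrite /wedge_opp oppr0 wedgexx. Qed.

Lemma wedge_oppN u p r : wedge_opp (- u) p r = - wedge_opp u p r.
Proof. by rewrite /wedge_opp opprK wedge_skew. Qed.

Lemma wedge_oppE v p r :
  wedge_opp v p r = (r == - p)%:R * ((v == p)%:R - (v == - p)%:R).
Proof.
have e1 : (v == p) && (- v == r) = (r == - p) && (v == p).
  by case: (v =P p) => [->|]; rewrite ?andbF ?andbT // eq_sym.
have e2 : (v == r) && (- v == p) = (r == - p) && (v == - p).
  case: (v =P r) => [->|vr]; first by rewrite eqr_oppLR andbb.
  by apply/esym/negbTE/negP => /andP[/eqP rp /eqP vp]; apply: vr; rewrite vp rp.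
by rewrite /wedge_opp /wedge e1 e2 -!mulnb !natrM; ring.
Qed.

Lemma wedge_opp_antipodal u a : wedge_opp u a (- a) = (u == a)%:R - (- u == a)%:R.
Proof. by rewrite wedge_oppE eqxx mul1r eqr_oppLR. Qed.

Lemma wedge_antipodal u v a : u + v != 0 -> wedge u v a (- a) = 0.
Proof.
move=> uv0; rewrite /wedge.
have -> : (u == a) && (v == - a) = false.
  by apply/negP => /andP[/eqP eu /eqP ev]; move: uv0; rewrite eu ev addrN eqxx.
have -> : (u == - a) && (v == a) = false.
  by apply/negP => /andP[/eqP eu /eqP ev]; move: uv0; rewrite eu ev addNr eqxx.
by rewrite subrr.
Qed.

Lemma coef1_to_tensor c a : coef1 (to_tensor c) a = coef2 c a (- a) / 2.
Proof.
rewrite coef1E /to_tensor big_flatten /= big_map coef2E mulr_suml.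
apply: eq_bigr => -[[q x] y] _ /=.
have [xy0|xy0] := eqVneq (x + y) 0; last by rewrite big_nil wedge_antipodal // mulr0 mul0r.
have -> : y = - x by apply/eqP; rewrite -addr_eq0 addrC xy0.
by rewrite -/(wedge_opp x) wedge_opp_antipodal !big_cons big_nil /=; ring.
Qed.

Lemma tensor_null_d3_coef s : tensor_null (fun a => d3_coef s a (- a)).
Proof.
case: s => [[[q x] y] z].
have [xyz0|xyz0] := eqVneq (x + y + z) 0; last first.
  apply: eq_tensor_null tensor_null0 => a; rewrite /d3_coef !wedge_antipodal //; first ring.
    by rewrite addrC addrA.
  by rewrite addrAC.
have -> : z = 0 - (x + y) by apply/eqP; rewrite sub0r -addr_eq0 addrC xyz0.
have n1 := @tensor_null_triple (- x) (- y) (x + y) ltac:(by rewrite -opprD addNr).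
have n2 := @tensor_null_triple x y (- (x + y)) ltac:(by rewrite addrN).
apply: eq_tensor_null (tensor_nullZ (q * br x y) (tensor_nullB n1 n2)) => a.
by rewrite d3_coef_weight !br0r !sub0r -!/(wedge_opp _) !wedge_opp_antipodal; ring.
Qed.

Lemma to_tensor_bound c c' : bound2 form (H1 form) (sub2 c c') ->
  tzero (sub1 (to_tensor c) (to_tensor c')).
Proof.
move=> [t [_ ct]].
apply: eq_tensor_null (tensor_nullZ (1 / 2) (tensor_null_sum t tensor_null_d3_coef)) => a.
by rewrite coef1_sub !coef1_to_tensor -coef2_d3 -ct coef2_sub; ring.
Qed.

Lemma to_tensor_linear k c c' :
  tzero (sub1 (to_tensor (add2 (scale2 k c) c')) (scale1 k (to_tensor c) ++ to_tensor c')).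
Proof.
apply: eq_tensor_null tensor_null0 => a.
by rewrite coef1_sub coef1_cat coef1_scale !coef1_to_tensor coef2_cat coef2_scale; ring.
Qed.

Lemma to_tensor_surj (u : chain1 H) :
  exists c, cycle2 form (H1 form) c /\ tzero (sub1 (to_tensor c) u).
Proof.
pose c := [seq (t.1, t.2, - t.2) | t <- u & t.2 != 0].
exists c; split; first split.
- rewrite /supp2 all_map; apply/allP => t; rewrite mem_filter => /andP[t0 _] /=.
  by rewrite !H1_neq0 // oppr_eq0.
- move=> a; rewrite coef1E /d2 !big_map big1 // => t _ /=.
  by rewrite brNr brxx oppr0 mulr0 mul0r.
have cE a : coef1 (sub1 (to_tensor c) u) a = \sum_(t <- u)
    ((if t.2 != 0 then t.1 * wedge_opp t.2 a (- a) else 0) / 2 - t.1 * (t.2 == a)%:R).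
  rewrite coef1_sub coef1_to_tensor coef2E big_map big_filter big_mkcond /= coef1E.
  by rewrite sumrB -mulr_suml.
apply: eq_tensor_null cE _; apply: tensor_null_sum => t.
have [->|t0] := eqVneq t.2 0.
  by apply: eq_tensor_null (tensor_nullZ (- t.1) tensor_null_at0) => a /=; ring.
apply: eq_tensor_null (tensor_nullZ (- t.1 / 2) (tensor_null_pair t.2)) => a /=.
by rewrite wedge_opp_antipodal; field.
Qed.

(* The inverse map x |-> [x]/\[-x], on coefficient functions. *)
Definition from_tensor (u : chain1 H) p r := \sum_(t <- u) t.1 * wedge_opp t.2 p r.

Lemma from_tensorE u p r :
  from_tensor u p r = (r == - p)%:R * (coef1 u p - coef1 u (- p)).
Proof.
rewrite /from_tensor !coef1E -sumrB mulr_sumr.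
by apply: eq_bigr => t _; rewrite wedge_oppE; ring.
Qed.

Lemma from_tensor_tens_rel (rr : chain2 H) p r : from_tensor (tens_rel rr) p r =
  \sum_(s <- rr)
    s.1.1 * (wedge_opp (s.1.2 + s.2) p r - wedge_opp s.1.2 p r - wedge_opp s.2 p r).
Proof.
rewrite /from_tensor /tens_rel big_flatten /= big_map; apply: eq_bigr => -[[q x] y] _ /=.
by rewrite !big_cons big_nil /=; ring.
Qed.

Lemma from_tensor_to_tensor c p r : from_tensor (to_tensor c) p r =
  \sum_(t <- c) (if t.1.2 + t.2 == 0 then t.1.1 * wedge t.1.2 t.2 p r else 0).
Proof.
rewrite /from_tensor /to_tensor big_flatten /= big_map; apply: eq_bigr => -[[q x] y] _ /=.
have [xy0|_] := eqVneq (x + y) 0; last by rewrite big_nil.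
have -> : y = - x by apply/eqP; rewrite -addr_eq0 addrC xy0.
by rewrite !big_cons big_nil /= /wedge_opp opprK (wedge_skew (- x)); field.
Qed.

(* A multiple of the boundary of [u]/\[v]/\[-u-v]. *)
Lemma boundary_wedge_oppD_form u v : form u v != 0 ->
  boundary (H1 form) (fun p r => wedge_opp (u + v) p r - wedge_opp u p r - wedge_opp v p r).
Proof.
move=> fuv.
have u0 : u != 0 := form_neq0_l fuv.
have v0 : v != 0 by apply: (@form_neq0_l _ u); rewrite form_skew oppr_eq0.
have uv0 : 0 - (u + v) != 0.
  by apply: (@form_neq0_l _ v); rewrite sub0r formNl form_addl form_alt addr0 oppr_eq0.
have buv : br u v != 0 by rewrite br_eq0.
have := boundary_d3_coef (br u v)^-1 (H1_neq0 u0) (H1_neq0 v0) (H1_neq0 uv0).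
apply: eq_boundary => p r.
by rewrite d3_coef_weight !sub0r /wedge_opp !br0r; field.
Qed.

Lemma boundary_wedge_oppD x y :
  boundary (H1 form) (fun p r => wedge_opp (x + y) p r - wedge_opp x p r - wedge_opp y p r).
Proof.
have [->|x0] := eqVneq x 0.
  by apply: eq_boundary (boundary0 _) => p r; rewrite add0r wedge_opp0; ring.
have [->|y0] := eqVneq y 0.
  by apply: eq_boundary (boundary0 _) => p r; rewrite addr0 wedge_opp0; ring.
have [xy0|xy0] := eqVneq (x + y) 0.
  have -> : x = - y by apply/eqP; rewrite -addr_eq0 xy0.
  by apply: eq_boundary (boundary0 _) => p r; rewrite addNr wedge_opp0 wedge_oppN; ring.
have [fxy|fxy] := eqVneq (form x y) 0; last exact: boundary_wedge_oppD_form.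
(* Otherwise go through x + (y + w) = (x + y) + w, for a w pairing
   non-trivially with x, y and x + y. *)
have [w hw] := @exists_form_neq0 [:: x; y; x + y] ltac:(by rewrite /= x0 y0 xy0).
have f1 : form x (y + w) != 0 by rewrite form_addr fxy add0r hw // inE eqxx.
have f2 : form y w != 0 by rewrite hw // !inE eqxx orbT.
have f3 : form (x + y) w != 0 by rewrite hw // !inE eqxx !orbT.
have := boundaryB (boundaryD (boundary_wedge_oppD_form f1) (boundary_wedge_oppD_form f2))
  (boundary_wedge_oppD_form f3).
by apply: eq_boundary => p r; rewrite [x + (y + w)]addrA; ring.
Qed.

(* An explicit combination of the boundaries of four elementary 3-chains of
   weight g. *)
Lemma boundary_wedge_weight g x x1 :
  x != 0 -> form g x1 != 0 -> form (g - x) x1 != 0 -> form x x1 != 0 ->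
  boundary (H1 form)
    (fun p r => br x1 g * wedge x (g - x) p r - br x g * wedge x1 (g - x1) p r).
Proof.
move=> x0 fgx1 fgxx1 fxx1; rewrite formBl in fgxx1.
have b1 : br x1 g != 0 by rewrite br_eq0 form_skew oppr_eq0.
have b2 : br x1 g + br x x1 != 0.
  by rewrite (br_skew x1 x) -brBr br_eq0 form_skew oppr_eq0 formBl.
have n1 : x1 != 0 := form_neq0_r fgx1.
have n2 : x1 + x1 != 0 by apply: (@form_neq0_r _ g); rewrite form_addr; lia.
have nz v : form v x1 != 0 -> v != 0 := @form_neq0_l v x1.
have n3 : g - (x1 + (x1 + x1)) != 0.
  by apply: nz; rewrite formBl !form_addl form_alt; lia.
have n4 : g - (x + x1) != 0 by apply: nz; rewrite formBl !form_addl form_alt; lia.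
have n5 : x + x1 != 0 by apply: nz; rewrite !form_addl form_alt; lia.
have n6 : g - (x + x1 + x1) != 0 by apply: nz; rewrite formBl !form_addl form_alt; lia.
have n7 : g - (x + (x1 + x1)) != 0.
  by apply: nz; rewrite formBl !form_addl form_alt; lia.
have B1 := boundary_d3_coef 1 (H1_neq0 n1) (H1_neq0 n2) (H1_neq0 n3).
have B2 := boundary_d3_coef 1 (H1_neq0 x0) (H1_neq0 n1) (H1_neq0 n4).
have B3 := boundary_d3_coef 1 (H1_neq0 n5) (H1_neq0 n1) (H1_neq0 n6).
have B4 := boundary_d3_coef 1 (H1_neq0 x0) (H1_neq0 n2) (H1_neq0 n7).
set a := br x1 g; set b := br x g; set c := br x x1.
have := boundaryD (boundaryD (boundaryZ (a + c) B2) (boundaryZ c B3))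
  (boundaryD (boundaryZ (- (c / 2)) B4) (boundaryZ (c * (b - 2 * c) / (2 * a)) B1)).
move/(boundaryZ (- (a + c)^-1)); apply: eq_boundary => p r.
rewrite !d3_coef_weight [x + (x1 + x1)]addrA !brDl !brDr !brxx -/a -/b -/c.
by field; rewrite b1 b2.
Qed.

Lemma exists_form_neq0_chain2 (c : chain2 H) : supp2 (H1 form) c ->
  exists x1, forall t, t \in c -> t.1.2 + t.2 != 0 ->
    [/\ form t.1.2 x1 != 0, form t.2 x1 != 0 & form (t.1.2 + t.2) x1 != 0].
Proof.
move=> Sc.
pose s := flatten [seq [:: t.1.2; t.2; t.1.2 + t.2] | t <- c & t.1.2 + t.2 != 0].
have s0 : all (fun u => u != 0) s.
  apply/allP => u /flattenP[l /mapP[t]]; rewrite mem_filter => /andP[tg0 ct] ->.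
  have /andP[] := allP Sc t ct; rewrite !H1E => x0 y0.
  by rewrite !inE => /or3P[]/eqP->.
have [x1 hx1] := exists_form_neq0 s0; exists x1 => t ct tg0.
have st u : u \in [:: t.1.2; t.2; t.1.2 + t.2] -> u \in s.
  by move=> tu; apply/flattenP; exists [:: t.1.2; t.2; t.1.2 + t.2] => //;
    apply/mapP; exists t; rewrite ?mem_filter ?tg0.
by split; apply/hx1/st; rewrite !inE eqxx ?orbT.
Qed.

(* The sum is coef1 (d2 c) G / br x1 G. *)
Lemma cycle_weight_sum_eq0 (c : chain2 H) x1 G : (forall a, coef1 (d2 form c) a = 0) ->
  \sum_(t <- c) (if t.1.2 + t.2 != 0 then
    t.1.1 * br t.1.2 (t.1.2 + t.2) / br x1 (t.1.2 + t.2) * (t.1.2 + t.2 == G)%:R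
    else 0) = 0.
Proof.
move=> dc0; have [->|G0] := eqVneq G 0.
  by apply: big1 => t _; case: ifP => // /negbTE->; rewrite mulr0.
transitivity ((\sum_(t <- c) (if t.1.2 + t.2 == G then t.1.1 * br t.1.2 t.2 else 0))
  / br x1 G).
  rewrite mulr_suml; apply: eq_bigr => t _.
  have [tG|tG] := eqVneq (t.1.2 + t.2) G; last by rewrite mul0r; case: ifP; rewrite ?mulr0.
  by rewrite tG G0 mulr1 -tG brDr brxx add0r.
by have := dc0 G; rewrite /coef1 /d2 big_map => ->; rewrite mul0r.
Qed.

Lemma cycle_wedge_x1_sum_eq0 (c : chain2 H) x1 p r :
  (forall a, coef1 (d2 form c) a = 0) ->
  \sum_(t <- c) (if t.1.2 + t.2 != 0 then
    t.1.1 * br t.1.2 (t.1.2 + t.2) / br x1 (t.1.2 + t.2) * wedge x1 (t.1.2 + t.2 - x1) p r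
    else 0) = 0.
Proof.
move=> dc0.
have wedgeE g : wedge x1 (g - x1) p r =
    (x1 == p)%:R * (g == r + x1)%:R - (x1 == r)%:R * (g == p + x1)%:R.
  by rewrite /wedge -!mulnb !natrM !subr_eq.
pose S G := \sum_(t <- c) (if t.1.2 + t.2 != 0 then
  t.1.1 * br t.1.2 (t.1.2 + t.2) / br x1 (t.1.2 + t.2) * (t.1.2 + t.2 == G)%:R else 0).
transitivity ((x1 == p)%:R * S (r + x1) - (x1 == r)%:R * S (p + x1)).
  rewrite !mulr_sumr -sumrB; apply: eq_bigr => t _.
  by case: ifP => _; rewrite ?wedgeE; ring.
by rewrite /S !cycle_weight_sum_eq0 // !mulr0 subrr.
Qed.

Lemma boundary_cycle_weight_nz c : cycle2 form (H1 form) c ->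
  boundary (H1 form) (fun p r => \sum_(t <- c)
    (if t.1.2 + t.2 != 0 then t.1.1 * wedge t.1.2 t.2 p r else 0)).
Proof.
move=> [Sc dc0]; have [x1 hx1] := exists_form_neq0_chain2 Sc.
pose rho (t : rat * H * H) := t.1.1 * br t.1.2 (t.1.2 + t.2) / br x1 (t.1.2 + t.2).
have reduce : boundary (H1 form) (fun p r => \sum_(t <- c) (if t.1.2 + t.2 != 0 then
    t.1.1 * wedge t.1.2 t.2 p r - rho t * wedge x1 (t.1.2 + t.2 - x1) p r else 0)).
  apply: boundary_sum => t ct /=.
  have [tg0|_] := boolP (t.1.2 + t.2 != 0); last exact: boundary0.
  have [x_x1 y_x1 g_x1] := hx1 t ct tg0.
  have gx : t.1.2 + t.2 - t.1.2 = t.2 by rewrite addrC addKr.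
  have gx_x1 : form (t.1.2 + t.2 - t.1.2) x1 != 0 by rewrite gx.
  have bg : br x1 (t.1.2 + t.2) != 0 by rewrite br_eq0 form_skew oppr_eq0.
  have := boundary_wedge_weight (form_neq0_l x_x1) g_x1 gx_x1 x_x1.
  move=> /(boundaryZ (t.1.1 / br x1 (t.1.2 + t.2))); apply: eq_boundary => p r.
  by rewrite gx /rho; field.
apply: eq_boundary reduce => p r.
rewrite -[LHS]subr0 -[X in _ - X](cycle_wedge_x1_sum_eq0 x1 p r dc0) -sumrB.
by apply: eq_bigr => t _; case: ifP => _; rewrite ?subr0.
Qed.

Lemma boundary_weight0_tensor_null c : tzero (to_tensor c) ->
  boundary (H1 form) (fun p r => \sum_(t <- c)
    (if t.1.2 + t.2 == 0 then t.1.1 * wedge t.1.2 t.2 p r else 0)).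
Proof.
move=> [rr crr].
apply: eq_boundary (boundary_sum (fun s _ => boundaryZ s.1.1 (boundary_wedge_oppD s.1.2 s.2))).
move=> p r; rewrite -from_tensor_to_tensor from_tensorE !crr -from_tensorE.
by rewrite from_tensor_tens_rel.
Qed.

Lemma to_tensor_inj c : cycle2 form (H1 form) c -> tzero (to_tensor c) ->
  bound2 form (H1 form) c.
Proof.
move=> cyc /boundary_weight0_tensor_null b0.
apply: eq_boundary (boundaryD (boundary_cycle_weight_nz cyc) b0) => p r.
by rewrite coef2E -big_split; apply: eq_bigr => t _ /=; case: eqP => _ /=; ring.
Qed.

End NondegenerateForm.

Theorem corollary4p2 (H : zmodType) (form : H -> H -> int)
  (form_addl : forall x y z, form (x + y) z = form x z + form y z)
  (form_addr : forall x y z, form x (y + z) = form x y + form x z)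
  (form_alt : forall x, form x x = 0)
  (form_nondeg : forall x, (forall y, form x y = 0) -> x = 0) :
  (* the map H_2(Q[H]) -> H_2(Q[H^(1)]) induced by varpi^(1) is well defined
     and bijective *)
  ((forall z, cycle2 form predT z -> cycle2 form (H1 form) (proj2 form z)) /\
   (forall z, bound2 form predT z -> bound2 form (H1 form) (proj2 form z)) /\
   (forall z', cycle2 form (H1 form) z' ->
      exists z, cycle2 form predT z /\
                bound2 form (H1 form) (sub2 (proj2 form z) z')) /\
   (forall z, cycle2 form predT z -> bound2 form (H1 form) (proj2 form z) ->
      bound2 form predT z)) /\
  (* there is a Q-linear bijection H_2(Q[H^(1)]) -> Q (x)_Z H *)
  (exists f : chain2 H -> chain1 H,
     (forall c c', cycle2 form (H1 form) c -> cycle2 form (H1 form) c' ->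
        bound2 form (H1 form) (sub2 c c') -> tzero (sub1 (f c) (f c'))) /\
     (forall (k : rat) c c', cycle2 form (H1 form) c -> cycle2 form (H1 form) c' ->
        tzero (sub1 (f (add2 (scale2 k c) c')) (scale1 k (f c) ++ f c'))) /\
     (forall c, cycle2 form (H1 form) c -> tzero (f c) -> bound2 form (H1 form) c) /\
     (forall t : chain1 H, exists c, cycle2 form (H1 form) c /\ tzero (sub1 (f c) t))).
Proof.
split.
  split; first exact: proj2_cycle.
  split; first exact: proj2_bound.
  split; first exact: proj2_surj.
  by move=> z _; apply: proj2_inj.
exists (@to_tensor H); split.
  by move=> c c' _ _; apply: to_tensor_bound.
split; first by move=> k c c' _ _; apply: to_tensor_linear.
split; first exact: to_tensor_inj.
exact: to_tensor_surj.
Qed.
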